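(* $E_{range}<^{\mathrm{fin}}_{\mathrm{Learn}}E_0$: every finite $E_{range}$-learnable family of structures is $E_0$-learnable, and there is a finite family (namely $\{\omega,\omega^*\}$) that is $E_0$-learnable but not $E_{range}$-learnable.
   Context: All structures are countable, have domain $\mathbb{N}$, are in a finite relational signature, and are identified with their atomic diagrams (elements of $2^{\mathbb{N}}$). A family of structures is a countable set of pairwise nonisomorphic such structures. $\mathrm{LD}(\mathfrak{K})\subseteq 2^{\mathbb{N}}$ is the set of structures with domain $\mathbb{N}$ isomorphic to a member of $\mathfrak{K}$ (subspace topology). For an equivalence relation $E$ on a space $X$, $\mathfrak{K}$ is $E$-learnable if there is a continuous $\Gamma:\mathrm{LD}(\mathfrak{K})\to X$ with $\mathcal{S}\cong\mathcal{S}'\iff\Gamma(\mathcal{S})\,E\,\Gamma(\mathcal{S}')$ for all $\mathcal{S},\mathcal{S}'\in\mathrm{LD}(\mathfrak{K})$. On Baire space $\mathbb{N}^{\mathbb{N}}$: $p\,E_0\,q\iff\exists m\,\forall n\ge m\ p(n)=q(n)$; $p\,E_{range}\,q\iff\{p(m):m\}=\{q(m):m\}$. $\omega$ and $\omega^*$ are the linear orders of the natural numbers and of the negative integers. For criteria $X,Y$: $X\leq^{\mathrm{fin}}_{\mathrm{Learn}}Y$ means every finite $X$-learnable family is $Y$-learnable, and $<^{\mathrm{fin}}_{\mathrm{Learn}}$ means $\leq^{\mathrm{fin}}_{\mathrm{Learn}}$ but not the converse. *)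

From Stdlib Require Import Arith List Lia.
Import ListNotations.

Record signature := Sig { nrel : nat; arity : nat -> nat }.

(* Only
   well-formed atomic facts (i < nrel, length l = arity i) can be true,
   so structures correspond exactly to atomic diagrams (elements of 2^N
   under a fixed coding of atomic facts). *)
Definition Struc (sig : signature) :=
  { R : nat -> list nat -> bool |
    forall i l, R i l = true -> i < nrel sig /\ length l = arity sig i }.

Definition rel {sig} (S : Struc sig) : nat -> list nat -> bool := proj1_sig S.

Definition iso {sig} (A B : Struc sig) : Prop :=
  exists f g : nat -> nat,
    (forall x, g (f x) = x) /\ (forall x, f (g x) = x) /\
    forall i l, rel A i l = rel B i (map f l).

Definition finite_family {sig} (K : list (Struc sig)) : Prop :=
  ForallOrdPairs (fun A B => ~ iso A B) K.

Definition LD {sig} (K : list (Struc sig)) (S : Struc sig) : Prop :=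
  exists A, In A K /\ iso S A.

Definition agree_on {sig} (S S' : Struc sig) (F : list (nat * list nat)) : Prop :=
  forall p, In p F -> rel S (fst p) (snd p) = rel S' (fst p) (snd p).

(* Continuity of Gamma : LD(K) -> Baire space, where LD(K) carries the
   subspace topology of Cantor space 2^N (basic opens = agreement on
   finitely many atomic facts) and Baire space the product topology. *)
Definition continuous_on_LD {sig} (K : list (Struc sig))
    (Gamma : Struc sig -> nat -> nat) : Prop :=
  forall S, LD K S -> forall n, exists F : list (nat * list nat),
    forall S', LD K S' -> agree_on S S' F ->
      forall k, k < n -> Gamma S' k = Gamma S k.

(* E-learnability for an equivalence relation E on Baire space.
   (Gamma is given as a total function; only its values on LD(K) matter.) *)
Definition learnable {sig} (E : (nat -> nat) -> (nat -> nat) -> Prop)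
    (K : list (Struc sig)) : Prop :=
  exists Gamma : Struc sig -> nat -> nat,
    continuous_on_LD K Gamma /\
    forall S S', LD K S -> LD K S' -> (iso S S' <-> E (Gamma S) (Gamma S')).

Definition E0 (p q : nat -> nat) : Prop :=
  exists m, forall n, m <= n -> p n = q n.

Definition Erange (p q : nat -> nat) : Prop :=
  forall x, (exists m, p m = x) <-> (exists m, q m = x).

Definition sigLO : signature := Sig 1 (fun _ => 2).

Definition omega_rel (i : nat) (l : list nat) : bool :=
  match i, l with
  | 0, [x; y] => Nat.leb x y
  | _, _ => false
  end.

(* omega^*: the negative integers; element n of the domain codes -(n+1),
   so -(x+1) <= -(y+1) iff y <= x. *)
Definition omegastar_rel (i : nat) (l : list nat) : bool :=
  match i, l with
  | 0, [x; y] => Nat.leb y x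
  | _, _ => false
  end.

Lemma omega_rel_ok : forall i l, omega_rel i l = true ->
  i < nrel sigLO /\ length l = arity sigLO i.
Proof.
  intros [|i] l; simpl; [|discriminate].
  destruct l as [|x [|y [|z l]]]; simpl; try discriminate; split; auto.
Qed.

Lemma omegastar_rel_ok : forall i l, omegastar_rel i l = true ->
  i < nrel sigLO /\ length l = arity sigLO i.
Proof.
  intros [|i] l; simpl; [|discriminate].
  destruct l as [|x [|y [|z l]]]; simpl; try discriminate; split; auto.
Qed.

Definition omega : Struc sigLO := exist _ omega_rel omega_rel_ok.
Definition omegastar : Struc sigLO := exist _ omegastar_rel omegastar_rel_ok.

(* For the first part, a learner Γ for E_range becomes an E_0-learner after
   replacing its output by the running trace "which elements of a fixed finite
   set W have appeared so far": since the family is finite, finitely many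
   values W suffice to tell apart the ranges of Γ on any two non-isomorphic
   members, and the trace is eventually constant with value the trace of the
   full range.

   {ω, ω*} is E_0-learnable: in a copy of ω, new least elements stop appearing
   while new greatest ones keep appearing, and in a copy of ω* it is the other
   way round, so the kind of the latest record converges.  It is not
   E_range-learnable: every finite set of atomic facts true in ω also holds in
   a copy of ω* (reverse an initial segment), so by continuity every value
   output on ω is also output on some copy of ω*, hence lies in the range of
   Γ on ω*; symmetrically, and then ω ≅ ω* would follow. *)

From Stdlib Require Import List Arith Bool Lia Classical Wf_nat.
Import ListNotations.

Lemma iso_refl {sig} (A : Struc sig) : iso A A.
Proof.
  exists (fun x => x), (fun x => x).
  repeat split; intros; now rewrite ?map_id.
Qed.

Lemma iso_sym {sig} (A B : Struc sig) : iso A B -> iso B A.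
Proof.
  intros (f & g & gf & fg & Hrel). exists g, f. repeat split; auto.
  intros i l. rewrite Hrel, map_map, <- (map_id l) at 1.
  f_equal. apply map_ext. auto.
Qed.

Lemma iso_trans {sig} (A B C : Struc sig) : iso A B -> iso B C -> iso A C.
Proof.
  intros (f & g & gf & fg & Hrel) (f' & g' & gf' & fg' & Hrel').
  exists (fun x => f' (f x)), (fun x => g (g' x)). repeat split.
  - intro x. now rewrite gf'.
  - intro x. now rewrite fg.
  - intros i l. now rewrite Hrel, Hrel', map_map.
Qed.

Lemma iso_copies_iff {sig} (X Y A B : Struc sig) :
  iso X A -> iso Y B -> (iso X Y <-> iso A B).
Proof.
  intros XA YB. split; intro H.
  - exact (iso_trans _ _ _ (iso_trans _ _ _ (iso_sym _ _ XA) H) YB).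
  - exact (iso_trans _ _ _ (iso_trans _ _ _ XA H) (iso_sym _ _ YB)).
Qed.

Lemma LD_of_iso {sig} (K : list (Struc sig)) S A : In A K -> iso S A -> LD K S.
Proof. intros. now exists A. Qed.

Lemma Erange_sym p q : Erange p q -> Erange q p.
Proof. intros H x. specialize (H x). tauto. Qed.

Lemma Erange_trans p q r : Erange p q -> Erange q r -> Erange p r.
Proof. intros H H' x. specialize (H x). specialize (H' x). tauto. Qed.

Lemma forallb_ext_in {A} (p q : A -> bool) l :
  (forall x, In x l -> p x = q x) -> forallb p l = forallb q l.
Proof. induction l; simpl; intros H; auto. rewrite H, IHl; auto. Qed.

Lemma le_list_max x l : In x l -> x <= list_max l.
Proof.
  intro Hx. pose proof (proj1 (list_max_le l (list_max l)) (le_n _)) as H.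
  rewrite Forall_forall in H. auto.
Qed.

Lemma continuous_on_LD_causal {sig} (K : list (Struc sig)) Gam
    (Phi : (nat -> nat) -> nat -> nat) :
  (forall p q n, (forall k, k <= n -> p k = q k) -> Phi p n = Phi q n) ->
  continuous_on_LD K Gam -> continuous_on_LD K (fun S => Phi (Gam S)).
Proof.
  intros Hcausal Hc S LS n. destruct (Hc S LS n) as [F HF]. exists F.
  intros S' LS' Hag k Hk. apply Hcausal. intros j Hj. apply HF; auto. lia.
Qed.

Definition seen (p : nat -> nat) (n x : nat) : bool :=
  existsb (fun m => p m =? x) (seq 0 (S n)).

Lemma seen_spec p n x : seen p n x = true <-> exists m, m <= n /\ p m = x.
Proof.
  unfold seen. rewrite existsb_exists. split.
  - intros (m & Hm & Hpm). apply in_seq in Hm. apply Nat.eqb_eq in Hpm.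
    exists m. split; [lia | auto].
  - intros (m & Hm & Hpm). exists m. rewrite in_seq, Nat.eqb_eq. split; [lia | auto].
Qed.

Lemma seen_eventually p W : exists N, forall n, N <= n -> forall x, In x W ->
  (seen p n x = true <-> exists m, p m = x).
Proof.
  induction W as [|x W [N HN]]; [exists 0; intros ? ? ? []|].
  assert (Hseen : forall n, seen p n x = true -> exists m, p m = x)
    by (intros n Hn; apply seen_spec in Hn; destruct Hn as (m & _ & Hm); eauto).
  destruct (classic (exists m, p m = x)) as [[m Hm] | Hx].
  - exists (max m N). intros n Hn y [<- | Hy]; [| apply HN; auto; lia].
    split; [apply Hseen|]. intros _. apply seen_spec. exists m. split; [lia | auto].
  - exists N. intros n Hn y [<- | Hy]; [| apply HN; auto].
    split; [apply Hseen | contradiction].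
Qed.

Fixpoint bits_code (b : nat -> bool) (W : list nat) : nat :=
  match W with
  | [] => 0
  | x :: W' => Nat.b2n (b x) + 2 * bits_code b W'
  end.

Lemma bits_code_ext b b' W :
  (forall x, In x W -> b x = b' x) -> bits_code b W = bits_code b' W.
Proof. induction W; simpl; intros H; auto. rewrite H, IHW; auto. Qed.

Lemma bits_code_inj b b' W :
  bits_code b W = bits_code b' W -> forall x, In x W -> b x = b' x.
Proof.
  induction W as [|y W IH]; simpl; intros H x Hx; [contradiction|].
  assert (b y = b' y /\ bits_code b W = bits_code b' W) as [Hy HW]
    by (destruct (b y), (b' y); simpl in H; split; auto; lia).
  destruct Hx as [<- | Hx]; auto.
Qed.

Definition range_trace (W : list nat) (p : nat -> nat) (n : nat) : nat :=
  bits_code (seen p n) W.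

Lemma range_trace_causal W p q n :
  (forall k, k <= n -> p k = q k) -> range_trace W p n = range_trace W q n.
Proof.
  intros H. apply bits_code_ext. intros x _. apply eq_iff_eq_true.
  rewrite !seen_spec. split; intros (m & Hm & Hx); exists m; rewrite ?H in *; auto.
Qed.

Lemma E0_range_trace_iff W p q :
  E0 (range_trace W p) (range_trace W q) <->
  forall x, In x W -> ((exists m, p m = x) <-> (exists m, q m = x)).
Proof.
  destruct (seen_eventually p W) as [Np Hp], (seen_eventually q W) as [Nq Hq].
  split.
  - intros [m Hm] x Hx. set (n := max m (max Np Nq)).
    rewrite <- (Hp n), <- (Hq n) by (unfold n; lia || auto).
    rewrite (bits_code_inj _ _ _ (Hm n ltac:(lia)) x Hx). reflexivity.
  - intros Hagree. exists (max Np Nq). intros n Hn. apply bits_code_ext.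
    intros x Hx. apply eq_iff_eq_true.
    rewrite Hp, Hq by (lia || auto). auto.
Qed.

Lemma finite_separating_set {A} (Gam : A -> nat -> nat) (L : list (A * A)) :
  exists W, forall a b, In (a, b) L ->
    (forall x, In x W -> ((exists m, Gam a m = x) <-> (exists m, Gam b m = x))) ->
    Erange (Gam a) (Gam b).
Proof.
  induction L as [|[a b] L [W HW]]; [exists []; intros ? ? []|].
  destruct (classic (Erange (Gam a) (Gam b))) as [Hab | Hab].
  - exists W. intros a' b' [[= <- <-] | Hin] Hagree; auto.
  - apply not_all_ex_not in Hab. destruct Hab as [x Hx].
    exists (x :: W). intros a' b' [[= <- <-] | Hin] Hagree.
    + exfalso. apply Hx, Hagree. now left.
    + apply HW; auto. intros y Hy. apply Hagree. now right.
Qed.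

Lemma learnable_E0_of_Erange {sig} (K : list (Struc sig)) :
  learnable Erange K -> learnable E0 K.
Proof.
  intros [Gam [Hc Hl]].
  destruct (finite_separating_set Gam (list_prod K K)) as [W HW].
  exists (fun S => range_trace W (Gam S)). split.
  - apply continuous_on_LD_causal; [apply range_trace_causal | exact Hc].
  - intros X Y LX LY. rewrite E0_range_trace_iff, Hl by assumption.
    split; [intros H x _; apply H|]. intros Hagree.
    destruct LX as (A & HA & XA), LY as (B & HB & YB).
    assert (LA : LD K A) by (apply (LD_of_iso K A A HA), iso_refl).
    assert (LB : LD K B) by (apply (LD_of_iso K B B HB), iso_refl).
    assert (EXA : Erange (Gam X) (Gam A)) by (apply Hl; auto; now exists A).
    assert (EYB : Erange (Gam Y) (Gam B)) by (apply Hl; auto; now exists B).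
    assert (EAB : Erange (Gam A) (Gam B)).
    { apply HW; [now apply in_prod|]. intros x Hx.
      rewrite <- (EXA x), <- (EYB x). auto. }
    exact (Erange_trans _ _ _ EXA (Erange_trans _ _ _ EAB (Erange_sym _ _ EYB))).
Qed.

Lemma omega_not_iso_omegastar : ~ iso omega omegastar.
Proof.
  intros (f & g & gf & fg & Hrel).
  specialize (Hrel 0 [0; g (f 0 + 1)]). simpl in Hrel. rewrite fg in Hrel.
  destruct (Nat.leb_spec (f 0 + 1) (f 0)); [lia | discriminate].
Qed.

Lemma finite_family_omega_omegastar : finite_family [omega; omegastar].
Proof. repeat constructor. apply omega_not_iso_omegastar. Qed.

Definition record_low (r : nat -> nat -> bool) (m : nat) : bool :=
  forallb (fun j => r m j) (seq 0 m).

Definition record_high (r : nat -> nat -> bool) (m : nat) : bool :=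
  forallb (fun j => r j m) (seq 0 m).

Fixpoint last_record (r : nat -> nat -> bool) (n : nat) : nat :=
  match n with
  | 0 => 0
  | S k => if record_low r (S k) then 1
           else if record_high r (S k) then 0
           else last_record r k
  end.

Lemma last_record_ext r r' n :
  (forall x y, x <= n -> y <= n -> r x y = r' x y) ->
  last_record r n = last_record r' n.
Proof.
  induction n as [|k IH]; simpl; intros H; auto.
  rewrite IH by (intros; apply H; lia). unfold record_low, record_high.
  rewrite (forallb_ext_in (fun j => r (S k) j) (fun j => r' (S k) j)),
    (forallb_ext_in (fun j => r j (S k)) (fun j => r' j (S k)));
    auto; intros j Hj; apply in_seq in Hj; apply H; lia.
Qed.

Definition eventually_const (p : nat -> nat) (c : nat) : Prop :=
  exists N, forall n, N <= n -> p n = c.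

Lemma E0_eventually_const_iff p q c d :
  eventually_const p c -> eventually_const q d -> (E0 p q <-> c = d).
Proof.
  intros [N HN] [M HM]. split.
  - intros [m Hm]. specialize (Hm (max m (max N M)) ltac:(lia)).
    now rewrite HN, HM in Hm by lia.
  - intros <-. exists (max N M). intros n Hn. rewrite HN, HM; auto; lia.
Qed.

Lemma last_record_eventually_0 r a m0 :
  (forall m, a < m -> record_low r m = false) -> a < m0 ->
  record_high r m0 = true -> eventually_const (last_record r) 0.
Proof.
  intros Hlow Ha Hhigh. exists m0. intros n Hn. induction Hn as [|n Hn IH].
  - destruct m0 as [|m0]; [lia|]. simpl. now rewrite Hlow, Hhigh by lia.
  - simpl. rewrite Hlow by lia. now destruct (record_high r (S n)).
Qed.

Lemma last_record_eventually_1 r a m0 :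
  (forall m, a < m -> record_high r m = false) -> a < m0 ->
  record_low r m0 = true -> eventually_const (last_record r) 1.
Proof.
  intros Hhigh Ha Hlow. exists m0. intros n Hn. induction Hn as [|n Hn IH].
  - destruct m0 as [|m0]; [lia|]. simpl. now rewrite Hlow.
  - simpl. rewrite Hhigh by lia. now destruct (record_low r (S n)).
Qed.

Definition order_by (f : nat -> nat) (x y : nat) : bool := f x <=? f y.

Section Bijection.

Variables f g : nat -> nat.
Hypothesis gf : forall x, g (f x) = x.
Hypothesis fg : forall x, f (g x) = x.

Lemma no_record_low_after_min m : g 0 < m -> record_low (order_by f) m = false.
Proof.
  intros Hm. apply not_true_is_false. intros Hlow.
  unfold record_low in Hlow. rewrite forallb_forall in Hlow.
  specialize (Hlow (g 0) ltac:(apply in_seq; lia)).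
  unfold order_by in Hlow. rewrite fg in Hlow. apply Nat.leb_le in Hlow.
  assert (f m = 0) as Hfm by lia. rewrite <- Hfm, gf in Hm. lia.
Qed.

(* The first element whose value exceeds all values on [0, g 0]. *)
Lemma record_high_after_min : exists m, g 0 < m /\ record_high (order_by f) m = true.
Proof.
  set (v := S (list_max (map f (seq 0 (S (g 0)))))).
  assert (Hv : forall j, j <= g 0 -> f j < v).
  { intros j Hj. apply Nat.lt_succ_r, le_list_max, in_map, in_seq. lia. }
  destruct (dec_inh_nat_subset_has_unique_least_element (fun m => v <= f m))
    as (m & [Hvm Hleast] & _).
  - intro n. apply Nat.le_decidable.
  - exists (g v). now rewrite fg.
  - exists m. split.
    + destruct (Nat.lt_ge_cases (g 0) m) as [| Hm]; auto. specialize (Hv m Hm). lia.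
    + apply forallb_forall. intros j Hj. apply in_seq in Hj. apply Nat.leb_le.
      destruct (Nat.lt_ge_cases (f j) v) as [| Hj']; [lia|].
      specialize (Hleast j Hj'). lia.
Qed.

End Bijection.

Definition order_of (X : Struc sigLO) (x y : nat) : bool := rel X 0 [x; y].

Lemma last_record_omega_copy X :
  iso X omega -> eventually_const (last_record (order_of X)) 0.
Proof.
  intros (f & g & gf & fg & Hrel).
  destruct (record_high_after_min f g fg) as (m & Hm & Hhigh).
  destruct (last_record_eventually_0 (order_by f) (g 0) m
              (no_record_low_after_min f g gf fg) Hm Hhigh) as [N HN].
  exists N. intros n Hn. rewrite <- (HN n Hn).
  apply last_record_ext. intros x y _ _. exact (Hrel 0 [x; y]).
Qed.

Lemma last_record_omegastar_copy X :
  iso X omegastar -> eventually_const (last_record (order_of X)) 1.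
Proof.
  intros (f & g & gf & fg & Hrel).
  destruct (record_high_after_min f g fg) as (m & Hm & Hhigh).
  destruct (last_record_eventually_1 (fun x y => order_by f y x) (g 0) m
              (no_record_low_after_min f g gf fg) Hm Hhigh) as [N HN].
  exists N. intros n Hn. rewrite <- (HN n Hn).
  apply last_record_ext. intros x y _ _. exact (Hrel 0 [x; y]).
Qed.

Lemma last_record_continuous :
  continuous_on_LD [omega; omegastar] (fun X => last_record (order_of X)).
Proof.
  intros X _ n.
  exists (map (fun p => (0, [fst p; snd p])) (list_prod (seq 0 n) (seq 0 n))).
  intros Y _ Hag k Hk. apply last_record_ext. intros x y Hx Hy. symmetry.
  apply (Hag (0, [x; y])), in_map_iff. exists (x, y).
  split; auto. apply in_prod; apply in_seq; lia.
Qed.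

Lemma LD_omega_omegastar_classify X : LD [omega; omegastar] X ->
  exists A c, In (A, c) [(omega, 0); (omegastar, 1)] /\ iso X A /\
    eventually_const (last_record (order_of X)) c.
Proof.
  intros (A & [<- | [<- | []]] & XA).
  - exists omega, 0. split; [now left|]. auto using last_record_omega_copy.
  - exists omegastar, 1. split; [now right; left|].
    auto using last_record_omegastar_copy.
Qed.

Lemma learnable_E0_omega_omegastar : learnable E0 [omega; omegastar].
Proof.
  exists (fun X => last_record (order_of X)). split; [exact last_record_continuous|].
  intros X Y LX LY.
  destruct (LD_omega_omegastar_classify X LX) as (A & c & HAc & XA & Hc),
    (LD_omega_omegastar_classify Y LY) as (B & d & HBd & YB & Hd).
  rewrite (iso_copies_iff X Y A B XA YB), (E0_eventually_const_iff _ _ _ _ Hc Hd).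
  destruct HAc as [[= <- <-] | [[= <- <-] | []]],
    HBd as [[= <- <-] | [[= <- <-] | []]];
    split; intro H; solve [ reflexivity | apply iso_refl | discriminate
      | exfalso; apply omega_not_iso_omegastar; auto using iso_sym ].
Qed.

Lemma Erange_learner_range_incl {sig} (K : list (Struc sig)) Gam A B :
  continuous_on_LD K Gam ->
  (forall S S', LD K S -> LD K S' -> (iso S S' <-> Erange (Gam S) (Gam S'))) ->
  LD K A -> In B K ->
  (forall F, exists S, iso S B /\ agree_on A S F) ->
  forall x, (exists m, Gam A m = x) -> exists m, Gam B m = x.
Proof.
  intros Hc Hl LA HB Hcopy x [m Hm].
  destruct (Hc A LA (S m)) as [F HF]. destruct (Hcopy F) as (S & SB & Hag).
  assert (LS : LD K S) by exact (LD_of_iso K S B HB SB).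
  assert (LB : LD K B) by exact (LD_of_iso K B B HB (iso_refl B)).
  apply (proj1 (Hl S B LS LB) SB x). exists m. rewrite (HF S LS Hag m); auto.
Qed.

Lemma pull_wf {sig} (h : nat -> nat) (A : Struc sig) :
  forall i l, rel A i (map h l) = true -> i < nrel sig /\ length l = arity sig i.
Proof.
  intros i l H. rewrite <- (length_map h l). exact (proj2_sig A i (map h l) H).
Qed.

Definition pull {sig} (h : nat -> nat) (A : Struc sig) : Struc sig :=
  exist _ (fun i l => rel A i (map h l)) (pull_wf h A).

Lemma pull_involution_iso {sig} (h : nat -> nat) (A : Struc sig) :
  (forall x, h (h x) = x) -> iso (pull h A) A.
Proof. intros hh. exists h, h. repeat split; auto. Qed.

Definition reverse_below (N x : nat) : nat := if x <? N then N - 1 - x else x.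

Lemma reverse_below_involutive N x : reverse_below N (reverse_below N x) = x.
Proof.
  unfold reverse_below.
  destruct (Nat.ltb_spec x N); [destruct (Nat.ltb_spec (N - 1 - x) N)
    | destruct (Nat.ltb_spec x N)]; lia.
Qed.

Lemma reverse_below_swaps N i l : (forall x, In x l -> x < N) ->
  omega_rel i l = omegastar_rel i (map (reverse_below N) l) /\
  omegastar_rel i l = omega_rel i (map (reverse_below N) l).
Proof.
  intros H. destruct i as [|i]; [|split; reflexivity].
  destruct l as [|x [|y [|z l]]]; try (split; reflexivity).
  assert (x < N) by (apply H; simpl; auto). assert (y < N) by (apply H; simpl; auto).
  simpl. unfold reverse_below.
  destruct (Nat.ltb_spec x N), (Nat.ltb_spec y N); try lia.
  destruct (Nat.leb_spec x y), (Nat.leb_spec (N - 1 - y) (N - 1 - x)),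
    (Nat.leb_spec y x), (Nat.leb_spec (N - 1 - x) (N - 1 - y)); split; auto; lia.
Qed.

Lemma facts_bound (F : list (nat * list nat)) :
  exists N, forall p, In p F -> forall x, In x (snd p) -> x < N.
Proof.
  exists (S (list_max (flat_map snd F))). intros p Hp x Hx.
  apply Nat.lt_succ_r, le_list_max, in_flat_map. eauto.
Qed.

Lemma reverse_below_local_copy (A B : Struc sigLO) :
  (forall N i l, (forall x, In x l -> x < N) ->
     rel A i l = rel B i (map (reverse_below N) l)) ->
  forall F, exists S, iso S B /\ agree_on A S F.
Proof.
  intros Hswap F. destruct (facts_bound F) as [N HN].
  exists (pull (reverse_below N) B). split.
  - apply pull_involution_iso, reverse_below_involutive.
  - intros p Hp. exact (Hswap N (fst p) (snd p) (HN p Hp)).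
Qed.

Lemma not_learnable_Erange_omega_omegastar : ~ learnable Erange [omega; omegastar].
Proof.
  intros [Gam [Hc Hl]].
  assert (Lo : LD [omega; omegastar] omega)
    by (apply (LD_of_iso _ _ omega); [now left | apply iso_refl]).
  assert (Ls : LD [omega; omegastar] omegastar)
    by (apply (LD_of_iso _ _ omegastar); [now right; left | apply iso_refl]).
  apply omega_not_iso_omegastar, Hl; auto. intro x. split.
  - apply (Erange_learner_range_incl _ Gam omega omegastar Hc Hl Lo); [now right; left|].
    apply reverse_below_local_copy. intros N i l H. apply (reverse_below_swaps N i l H).
  - apply (Erange_learner_range_incl _ Gam omegastar omega Hc Hl Ls); [now left|].
    apply reverse_below_local_copy. intros N i l H. apply (reverse_below_swaps N i l H).
Qed.

Theorem mainTheorem7 :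
  (forall (sig : signature) (K : list (Struc sig)),
      finite_family K -> learnable Erange K -> learnable E0 K) /\
  (finite_family [omega; omegastar] /\
   learnable E0 [omega; omegastar] /\
   ~ learnable Erange [omega; omegastar]).
Proof.
  split; [intros sig K _; apply learnable_E0_of_Erange|].
  split; [exact finite_family_omega_omegastar|].
  split; [exact learnable_E0_omega_omegastar | exact not_learnable_Erange_omega_omegastar].
Qed.
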